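(* Let $H$ be a complex Hilbert space with inner product $\langle\cdot,\cdot\rangle$. Let $(e_k)_{k\ge0}$ and $(f_k)_{k\ge0}$ be sequences in $H$ with $\langle e_j,f_k\rangle=0$ for $j\ne k$ and $\langle e_k,f_k\rangle\ne0$ for all $k$. Let $P_k(h):=\frac{\langle h,f_k\rangle}{\langle e_k,f_k\rangle}e_k$, so $\|P_k\|=\|e_k\|\|f_k\|/|\langle e_k,f_k\rangle|$. Let $A=(a_{nk})_{n,k\ge0}$ be complex scalars with $\sum_{k\ge0}|a_{nk}|\|P_k\|<\infty$ for each $n$, and define \[ S_n^A(h):=\sum_{k\ge0}a_{nk}\frac{\langle h,f_k\rangle}{\langle e_k,f_k\rangle}e_k,\qquad (S_n^A)^*(h)=\sum_{k\ge0}\overline{a_{nk}}\frac{\langle h,e_k\rangle}{\langle f_k,e_k\rangle}f_k. \] Then the following are equivalent: (i) $S_n^A(h)\to h$ weakly for all $h\in H$; (ii) $S_n^A(h)\to h$ in norm for all $h\in H$; (iii) $(S_n^A)^*(h)\to h$ weakly for all $h\in H$; (iv) $(S_n^A)^*(h)\to h$ in norm for all $h\in H$.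
   Context: $(S_n^A)^*$ is the Hilbert-space adjoint of $S_n^A$. *)

From HB Require Import structures.
From mathcomp Require Import all_boot all_order all_algebra.
From mathcomp Require Import complex.
From mathcomp Require Import reals.
Set Implicit Arguments. Unset Strict Implicit. Unset Printing Implicit Defensive.
Import Order.TTheory GRing.Theory Num.Theory.
Local Open Scope ring_scope.

Section Hilbert.
Variable R : realType.
Local Notation C := (R[i]).
Variable H : lmodType C.
Variable ip : H -> H -> C. (* <x, y>, linear in x, conjugate-linear in y *)

Definition hnorm (x : H) : R := Num.sqrt (complex.Re (ip x x)).

Definition cabs (z : C) : R := ComplexField.Normc.normc z.

Definition hilbert_space : Prop :=
  [/\ (forall (a : C) (x y z : H), ip (a *: x + y) z = a * ip x z + ip y z),
      (forall x y : H, ip y x = conjc (ip x y)),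
      (forall x : H, complex.Im (ip x x) = 0 /\ 0 <= complex.Re (ip x x)),
      (forall x : H, ip x x = 0 -> x = 0) &
      (forall u : nat -> H,
        (forall eps : R, 0 < eps -> exists N : nat, forall m n : nat,
           (N <= m)%N -> (N <= n)%N -> hnorm (u m - u n) < eps) ->
        exists l : H, forall eps : R, 0 < eps -> exists N : nat,
           forall n : nat, (N <= n)%N -> hnorm (u n - l) < eps)].

Definition norm_cvg (u : nat -> H) (l : H) : Prop :=
  forall eps : R, 0 < eps -> exists N : nat,
    forall n : nat, (N <= n)%N -> hnorm (u n - l) < eps.

Definition weak_cvg (u : nat -> H) (l : H) : Prop :=
  forall g : H, forall eps : R, 0 < eps -> exists N : nat,
    forall n : nat, (N <= n)%N -> cabs (ip (u n) g - ip l g) < eps.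

Definition has_sum (v : nat -> H) (s : H) : Prop :=
  norm_cvg (fun N => \sum_(k < N) v k) s.

End Hilbert.

(* Norm convergence implies weak convergence, and <S_n h, g> = <h, S_n^* g>
   turns weak convergence of S_n into weak convergence of S_n^*, so the only
   real work is to show that weak convergence S_n h -> h forces norm
   convergence; applied to the biorthogonal system (f_k, e_k) with
   coefficients conj(a_nk), the same argument handles S_n^*.
   Testing S_n e_j = a_nj e_j against f_j gives a_nj -> 1, hence S_n u -> u in
   norm on the span of the e_k.  This span is dense: by the projection theorem
   it suffices that a vector w orthogonal to every e_k vanishes, and such a w is
   orthogonal to every S_n w, so <w, w> = lim <S_n w, w> = 0.  Finally the S_n
   are uniformly bounded by the uniform boundedness principle (proved with
   Sokal's gliding hump), applied once to show that weakly convergent sequences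
   are bounded and once more to the operators themselves; an eps/3 argument
   concludes. *)

From HB Require Import structures.
From mathcomp Require Import all_boot all_order all_algebra.
From mathcomp Require Import complex.
From mathcomp Require Import reals.
From mathcomp Require Import boolp classical_sets.
From mathcomp Require Import ring lra zify.
Import Order.TTheory GRing.Theory Num.Theory.
Local Open Scope ring_scope.
Local Open Scope complex_scope.

Set Implicit Arguments. Unset Strict Implicit. Unset Printing Implicit Defensive.

Section ComplexModulus.
Variable R : realType.
Local Notation C := (R[i]).

Lemma cabsE (z : C) : cabs z = Num.sqrt (complex.Re z ^+ 2 + complex.Im z ^+ 2).
Proof. by case: z. Qed.

Lemma cabs_ge0 (z : C) : 0 <= cabs z.
Proof. by rewrite cabsE sqrtr_ge0. Qed.

Lemma cabs_gt0 (z : C) : z != 0 -> 0 < cabs z.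
Proof.
move=> z0; rewrite lt_def cabs_ge0 andbT.
by apply: contra z0 => /eqP /ComplexField.Normc.eq0_normc ->.
Qed.

Lemma cabs_eq0 (z : C) : cabs z = 0 -> z = 0.
Proof. exact: ComplexField.Normc.eq0_normc. Qed.

Lemma cabs0 : cabs (0 : C) = 0.
Proof. exact: ComplexField.Normc.normc0. Qed.

Lemma cabs1 : cabs (1 : C) = 1.
Proof. exact: ComplexField.Normc.normc1. Qed.

Lemma cabsM (x y : C) : cabs (x * y) = cabs x * cabs y.
Proof. exact: ComplexField.Normc.normcM. Qed.

Lemma cabsV (x : C) : cabs x^-1 = (cabs x)^-1.
Proof. exact: ComplexField.Normc.normcV. Qed.

Lemma cabsN (x : C) : cabs (- x) = cabs x.
Proof. exact: normcN. Qed.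

Lemma cabsD (x y : C) : cabs (x + y) <= cabs x + cabs y.
Proof. exact: le_normcD. Qed.

Lemma cabs_distC (x y : C) : cabs (x - y) = cabs (y - x).
Proof. by rewrite -cabsN opprB. Qed.

Lemma cabsJ (x : C) : cabs (conjc x) = cabs x.
Proof. by case: x => a b; rewrite /cabs /= sqrrN. Qed.

Lemma cabsR (r : R) : cabs r%:C = `|r|.
Proof. by rewrite cabsE /= expr0n /= addr0 sqrtr_sqr. Qed.

Lemma cabs_nat (n : nat) : cabs (n%:R : C) = n%:R.
Proof. by rewrite -(rmorph_nat (real_complex R)) cabsR ger0_norm. Qed.

Lemma Re_le_cabs (z : C) : complex.Re z <= cabs z.
Proof.
rewrite cabsE; apply: le_trans (ler_norm _) _.
by rewrite -sqrtr_sqr ler_wsqrtr // lerDl sqr_ge0.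
Qed.

Lemma mulcJ (z : C) : z * conjc z = (cabs z ^+ 2)%:C.
Proof.
case: z => a b; rewrite /cabs /= sqr_sqrtr ?addr_ge0 ?sqr_ge0 //.
by simpc; rewrite /= mulrC; congr (_ +i* _); ring.
Qed.

End ComplexModulus.

Section InnerProduct.
Variable R : realType.
Local Notation C := (R[i]).
Variables (H : lmodType C) (ip : H -> H -> C).
Hypothesis hs : hilbert_space ip.
Local Notation N := (hnorm ip).

Lemma ip_linear a x y z : ip (a *: x + y) z = a * ip x z + ip y z.
Proof. by case: hs. Qed.

Lemma ip_conj x y : ip y x = conjc (ip x y).
Proof. by case: hs. Qed.

Lemma ip0l z : ip 0 z = 0.
Proof.
have := ip_linear 1 0 0 z; rewrite scaler0 addr0 mul1r => h.
by apply: (addrI (ip 0 z)); rewrite addr0 -h.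
Qed.

Lemma ipDl x y z : ip (x + y) z = ip x z + ip y z.
Proof. by rewrite -[x]scale1r ip_linear mul1r scale1r. Qed.

Lemma ipZl a x z : ip (a *: x) z = a * ip x z.
Proof. by rewrite -[a *: x]addr0 ip_linear ip0l addr0. Qed.

Lemma ipNl x z : ip (- x) z = - ip x z.
Proof. by rewrite -scaleN1r ipZl mulN1r. Qed.

Lemma ipBl x y z : ip (x - y) z = ip x z - ip y z.
Proof. by rewrite ipDl ipNl. Qed.

Lemma ip_suml (I : Type) (s : seq I) (F : I -> H) z :
  ip (\sum_(i <- s) F i) z = \sum_(i <- s) ip (F i) z.
Proof.
elim: s => [|i s IH]; first by rewrite !big_nil ip0l.
by rewrite !big_cons ipDl IH.
Qed.

Lemma ip0r z : ip z 0 = 0.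
Proof. by rewrite ip_conj ip0l conjc0. Qed.

Lemma ipDr x y z : ip z (x + y) = ip z x + ip z y.
Proof. by rewrite ip_conj ipDl rmorphD /= -!ip_conj. Qed.

Lemma ipZr a x z : ip z (a *: x) = conjc a * ip z x.
Proof. by rewrite ip_conj ipZl rmorphM /= -ip_conj. Qed.

Lemma ipNr x z : ip z (- x) = - ip z x.
Proof. by rewrite ip_conj ipNl rmorphN /= -ip_conj. Qed.

Lemma ipBr x y z : ip z (x - y) = ip z x - ip z y.
Proof. by rewrite ipDr ipNr. Qed.

Lemma hnorm_ge0 x : 0 <= N x.
Proof. exact: sqrtr_ge0. Qed.

Lemma ip_sqnorm x : ip x x = (N x ^+ 2)%:C.
Proof.
have [_ _ /(_ x) [] + + _ _] := hs.
by rewrite /hnorm; case: (ip x x) => a b /= -> a0; rewrite sqr_sqrtr.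
Qed.

Lemma ip_self_eq0 x : ip x x = 0 -> x = 0.
Proof. by case: hs => _ _ _ + _; apply. Qed.

Lemma hnorm_eq0 x : N x = 0 -> x = 0.
Proof. by move=> x0; apply: ip_self_eq0; rewrite ip_sqnorm x0 expr0n. Qed.

Lemma hnorm0 : N 0 = 0.
Proof. by rewrite /hnorm ip0l sqrtr0. Qed.

Lemma hnormZ a x : N (a *: x) = cabs a * N x.
Proof.
apply/eqP; rewrite -(eqrXn2 (ltn0Sn 1)) ?mulr_ge0 ?cabs_ge0 ?hnorm_ge0 //.
apply/eqP/(@complexI R); rewrite -ip_sqnorm ipZl ipZr mulrA mulcJ ip_sqnorm.
by rewrite -rmorphM exprMn.
Qed.

Lemma hnormN x : N (- x) = N x.
Proof. by rewrite -scaleN1r hnormZ cabsN cabs1 mul1r. Qed.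

Lemma hnorm_distC x y : N (x - y) = N (y - x).
Proof. by rewrite -hnormN opprB. Qed.

Lemma hnorm_sqrD x y : N (x + y) ^+ 2 = N x ^+ 2 + N y ^+ 2 + 2 * complex.Re (ip x y).
Proof.
apply: (@complexI R); rewrite -ip_sqnorm ipDl !ipDr !ip_sqnorm (ip_conj x y).
by case: (ip x y) => a b; rewrite !rmorphD /= !rmorphM /=; simpc; congr (_ +i* _); ring.
Qed.

Lemma parallelogram x y :
  N (x + y) ^+ 2 + N (x - y) ^+ 2 = 2 * N x ^+ 2 + 2 * N y ^+ 2.
Proof.
rewrite !hnorm_sqrD hnormN ipNr.
have -> : complex.Re (- ip x y) = - complex.Re (ip x y) by case: (ip x y).
ring.
Qed.

Lemma cauchy_schwarz x y : cabs (ip x y) <= N x * N y.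
Proof.
have [y0|ny0] := eqVneq (N y) 0.
  by rewrite (hnorm_eq0 y0) ip0r cabs0 hnorm0 mulr0.
have qy : 0 < N y ^+ 2 by rewrite exprn_gt0 // lt_def ny0 hnorm_ge0.
set z := ip x y; set t := z / (N y ^+ 2)%:C.
(* [t *: y] is the orthogonal projection of [x] onto [y]. *)
have key : N (x - t *: y) ^+ 2 = N x ^+ 2 - cabs z ^+ 2 / N y ^+ 2.
  apply: (@complexI R); rewrite rmorphB fmorph_div /= -mulcJ.
  rewrite -!ip_sqnorm ipBl !ipBr !ipZl !ipZr -/z (ip_conj x y) -/z !ip_sqnorm /t.
  rewrite (fmorph_div (@conjc R)) /= oppr0 complexr0.
  by field; rewrite (inj_eq (@complexI _)).
have := sqr_ge0 (N (x - t *: y)); rewrite key subr_ge0 ler_pdivrMr // -exprMn => h.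
by rewrite -(ler_pXn2r (ltn0Sn 1)) ?nnegrE ?cabs_ge0 ?mulr_ge0 ?hnorm_ge0.
Qed.

Lemma hnormD x y : N (x + y) <= N x + N y.
Proof.
rewrite -(ler_pXn2r (ltn0Sn 1)) ?nnegrE ?addr_ge0 ?hnorm_ge0 //.
rewrite hnorm_sqrD sqrrD.
have := le_trans (Re_le_cabs _) (cauchy_schwarz x y); lra.
Qed.

Lemma hnorm_distD x y z : N (x - z) <= N (x - y) + N (y - z).
Proof. by have := hnormD (x - y) (y - z); rewrite addrA subrK. Qed.

Lemma hnorm_sum (I : Type) (s : seq I) (F : I -> H) :
  N (\sum_(i <- s) F i) <= \sum_(i <- s) N (F i).
Proof.
elim: s => [|i s IH]; first by rewrite !big_nil hnorm0.
by rewrite !big_cons; apply: le_trans (hnormD _ _) _; rewrite lerD2l.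
Qed.

Lemma ip_eq0_of_minimal w u : (forall t : C, N w <= N (w - t *: u)) -> ip w u = 0.
Proof.
move=> w_min; set z := ip w u; set s : R := (N u ^+ 2 + 1)^-1.
have s_gt0 : 0 < s by rewrite invr_gt0 ltr_pwDr ?sqr_ge0.
have su_lt1 : s * N u ^+ 2 < 1.
  by rewrite mulrC ltr_pdivrMr ?mul1r ?ltrDl ?ltr01 ?ltr_pwDr ?sqr_ge0.
(* With [t = s z] and [s] small, minimality forces [|z|^2 <= 0]. *)
have := w_min (s%:C * z).
rewrite -(ler_pXn2r (ltn0Sn 1)) ?nnegrE ?hnorm_ge0 // hnorm_sqrD hnormN.
rewrite hnormZ ipNr ipZr -/z rmorphM /= oppr0 complexr0 cabsM cabsR.
rewrite (ger0_norm (ltW s_gt0)) -[s%:C * _ * z]mulrA [conjc z * z]mulrC mulcJ -rmorphM /=.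
have E : (s * cabs z * N u) ^+ 2 + 2 * - (s * cabs z ^+ 2) =
    s * cabs z ^+ 2 * (s * N u ^+ 2 - 2) by ring.
have [-> _ //|z_neq0] := eqVneq z 0.
have sz_gt0 : 0 < s * cabs z ^+ 2 by rewrite mulr_gt0 // exprn_gt0 // cabs_gt0.
by rewrite -addrA E lerDl pmulr_rge0 // subr_ge0 => h; exfalso; lra.
Qed.

End InnerProduct.

Lemma inv_succ_lt (R : archiRealFieldType) (eps : R) :
  0 < eps -> exists j, forall m, (j <= m)%N -> (m.+1%:R)^-1 < eps.
Proof.
move=> eps_gt0; have b0 : 0 <= eps^-1 by rewrite invr_ge0 ltW.
exists (Num.bound eps^-1) => m jm.
rewrite -[eps]invrK ltf_pV2 ?posrE ?invr_gt0 ?ltr0Sn //.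
by apply: lt_le_trans (archi_boundP b0) _; rewrite ler_nat; lia.
Qed.

Section Convergence.
Variable R : realType.
Local Notation C := (R[i]).
Variables (H : lmodType C) (ip : H -> H -> C).
Hypothesis hs : hilbert_space ip.
Local Notation N := (hnorm ip).

Definition ccvg (u : nat -> C) (l : C) : Prop :=
  forall eps : R, 0 < eps -> exists M : nat,
    forall n : nat, (M <= n)%N -> cabs (u n - l) < eps.

Lemma ccvg_unique u l l' : ccvg u l -> ccvg u l' -> l = l'.
Proof.
move=> ul ul'; apply/eqP; rewrite -subr_eq0; apply/eqP/cabs_eq0/eqP.
rewrite eq_le cabs_ge0 andbT; apply/ler_addgt0Pr => eps eps_gt0.
have eps2_gt0 : 0 < eps / 2 by rewrite divr_gt0.
have [M1 uM1] := ul _ eps2_gt0; have [M2 uM2] := ul' _ eps2_gt0.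
have := uM1 _ (leq_maxl M1 M2); have := uM2 _ (leq_maxr M1 M2).
set m := maxn M1 M2.
have -> : l - l' = (u m - l') + (l - u m) by rewrite [RHS]addrC [RHS]addrA subrK.
have := cabsD (u m - l') (l - u m); rewrite (cabs_distC l); lra.
Qed.

Lemma eventually_const_ccvg u l :
  (exists M, forall n, (M <= n)%N -> u n = l) -> ccvg u l.
Proof. by case=> M uM eps eps_gt0; exists M => n /uM ->; rewrite subrr cabs0. Qed.

Lemma ccvg_conj u l : ccvg u l -> ccvg (fun n => conjc (u n)) (conjc l).
Proof.
by move=> ul eps /ul [M uM]; exists M => n /uM; rewrite -rmorphB /= cabsJ.
Qed.

Lemma ccvg_ext u v l : (forall n, u n = v n) -> ccvg u l -> ccvg v l.
Proof. by move=> uv ul eps /ul [M uM]; exists M => n; rewrite -uv; apply: uM. Qed.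

Lemma norm_cvg_unique u l l' : norm_cvg ip u l -> norm_cvg ip u l' -> l = l'.
Proof.
move=> ul ul'; apply/eqP; rewrite -subr_eq0; apply/eqP/(hnorm_eq0 hs)/eqP.
rewrite eq_le hnorm_ge0 andbT; apply/ler_addgt0Pr => eps eps_gt0.
have eps2_gt0 : 0 < eps / 2 by rewrite divr_gt0.
have [M1 uM1] := ul _ eps2_gt0; have [M2 uM2] := ul' _ eps2_gt0.
have := uM1 _ (leq_maxl M1 M2); have := uM2 _ (leq_maxr M1 M2).
have := hnorm_distD hs l (u (maxn M1 M2)) l'.
rewrite (hnorm_distC hs l (u _)); lra.
Qed.

Lemma eventually_const_norm_cvg u l :
  (exists M, forall n, (M <= n)%N -> u n = l) -> norm_cvg ip u l.
Proof.
by case=> M uM eps eps_gt0; exists M => n /uM ->; rewrite subrr (hnorm0 hs).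
Qed.

Lemma norm_cvg_ipl u l g : norm_cvg ip u l -> ccvg (fun n => ip (u n) g) (ip l g).
Proof.
move=> ul eps eps_gt0.
have g1_gt0 : 0 < N g + 1 by rewrite ltr_pwDr ?hnorm_ge0.
have [M uM] := ul _ (divr_gt0 eps_gt0 g1_gt0); exists M => n /uM unM.
rewrite -(ipBl hs); apply: le_lt_trans (cauchy_schwarz hs _ _) _.
have g0 := hnorm_ge0 ip g; have d0 := hnorm_ge0 ip (u n - l).
move: unM; rewrite ltr_pdivlMr // mulrDr mulr1; lra.
Qed.

Lemma norm_cvg_weak u l : norm_cvg ip u l -> weak_cvg ip u l.
Proof. by move=> ul g; apply: norm_cvg_ipl. Qed.

Lemma norm_cvg_linear u v l l' (t : C) :
  norm_cvg ip u l -> norm_cvg ip v l' ->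
  norm_cvg ip (fun n => u n + t *: v n) (l + t *: l').
Proof.
move=> ul vl' eps eps_gt0.
have eps2_gt0 : 0 < eps / 2 by rewrite divr_gt0.
have t1_gt0 : 0 < cabs t + 1 by rewrite ltr_pwDr ?cabs_ge0.
have [M1 uM1] := ul _ eps2_gt0; have [M2 vM2] := vl' _ (divr_gt0 eps2_gt0 t1_gt0).
exists (maxn M1 M2) => n; rewrite geq_max => /andP [/uM1 un /vM2].
rewrite ltr_pdivlMr // => vn.
rewrite opprD addrACA -scalerBr; apply: le_lt_trans (hnormD hs _ _) _.
rewrite (hnormZ hs); have := cabs_ge0 t; have := hnorm_ge0 ip (v n - l'); nra.
Qed.

Lemma weak_cvg_adjoint (S T : nat -> H -> H) :
  (forall n h g, ip (S n h) g = ip h (T n g)) ->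
  (forall h, weak_cvg ip (fun n => S n h) h) -> forall h, weak_cvg ip (fun n => T n h) h.
Proof.
move=> ST Sw h g; rewrite (ip_conj hs g h).
by apply: ccvg_ext (ccvg_conj (Sw g h)) => n; rewrite ST -(ip_conj hs).
Qed.

Lemma has_sum_unique v s s' : has_sum ip v s -> has_sum ip v s' -> s = s'.
Proof. exact: norm_cvg_unique. Qed.

Lemma has_sum_ext v w s : (forall k, v k = w k) -> has_sum ip v s -> has_sum ip w s.
Proof.
move=> vw vs eps /vs [M vM]; exists M => n /vM.
by under eq_bigr do rewrite vw.
Qed.

Lemma has_sum_linear v w s s' (t : C) : has_sum ip v s -> has_sum ip w s' ->
  has_sum ip (fun k => v k + t *: w k) (s + t *: s').
Proof.
move=> vs ws'; rewrite /has_sum.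
by under eq_fun do rewrite big_split -scaler_sumr; apply: norm_cvg_linear.
Qed.

Lemma has_sum_ipl v s g : has_sum ip v s ->
  ccvg (fun n => \sum_(k < n) ip (v k) g) (ip s g).
Proof.
by move=> vs; under eq_fun do rewrite -(ip_suml hs); apply: norm_cvg_ipl.
Qed.

Lemma hilbert_complete u :
  (forall eps, 0 < eps -> exists M, forall m n, (M <= m)%N -> (M <= n)%N ->
     N (u m - u n) < eps) ->
  exists l, norm_cvg ip u l.
Proof. by case: hs => _ _ _ _; apply. Qed.

Lemma geometric_norm_cvg (x : nat -> H) (r : nat -> R) :
  (forall j, N (x j.+1 - x j) <= r j) -> (forall j, r j.+1 <= r j / 2) ->
  (forall eps, 0 < eps -> exists j, r j < eps) ->
  exists l, forall j, N (x j - l) <= 2 * r j.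
Proof.
move=> xS rS r_small.
have r_ge0 j : 0 <= r j by apply: le_trans (hnorm_ge0 _ _) (xS j).
have tail j i : N (x (j + i)%N - x j) <= 2 * r j - 2 * r (j + i)%N.
  elim: i => [|i IH]; first by rewrite addn0 subrr (hnorm0 hs) subrr.
  rewrite addnS; apply: le_trans (hnorm_distD hs _ (x (j + i)%N) _) _.
  have := xS (j + i)%N; have := rS (j + i)%N; lra.
have near j m : (j <= m)%N -> N (x m - x j) <= 2 * r j.
  move=> /subnKC <-; apply: le_trans (tail j (m - j)%N) _.
  have := r_ge0 (j + (m - j))%N; lra.
have [l xl] : exists l, norm_cvg ip x l.
  apply: hilbert_complete => eps eps_gt0.
  have [j rj] := r_small (eps / 4) (divr_gt0 eps_gt0 (ltr0Sn _ 3)).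
  exists j => m n jm jn; apply: le_lt_trans (hnorm_distD hs _ (x j) _) _.
  rewrite (hnorm_distC hs (x j)); have := near j m jm; have := near j n jn; lra.
exists l => j; apply/ler_addgt0Pr => eps /xl [M xM].
apply: le_trans (hnorm_distD hs _ (x (maxn M j)) _) _.
rewrite (hnorm_distC hs (x j)); apply: lerD; first by apply: near; apply: leq_maxr.
by apply/ltW/xM/leq_maxl.
Qed.

End Convergence.

Section UniformBoundedness.
Variable R : realType.
Local Notation C := (R[i]).
Variables (H : lmodType C) (ip : H -> H -> C).
Hypothesis hs : hilbert_space ip.
Local Notation N := (hnorm ip).

Variable p : nat -> H -> R.
Hypothesis pD : forall n x y, p n (x + y) <= p n x + p n y.
Hypothesis pZ : forall n (t : C) x, p n (t *: x) = cabs t * p n x.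

Lemma seminorm0 n : p n 0 = 0.
Proof. by rewrite -(scale0r (0 : H)) pZ cabs0 mul0r. Qed.

Lemma seminormN n x : p n (- x) = p n x.
Proof. by rewrite -scaleN1r pZ cabsN cabs1 mul1r. Qed.

Lemma seminorm_shift n x y : p n y <= p n (x + y) \/ p n y <= p n (x - y).
Proof.
have p2y : p n (y + y) = 2 * p n y by rewrite -mulr2n -scaler_nat pZ cabs_nat.
have := pD n (x + y) (- (x - y)).
rewrite seminormN opprB [x + y + _]addrC addrA subrK p2y.
by case: (lerP (p n y) (p n (x + y))) => ?; [left | right; lra].
Qed.

Lemma unbounded_humps :
  ~ (exists M, 0 <= M /\ forall n x, p n x <= M * N x) ->
  forall M r, 0 < r -> exists n x, N x <= r /\ M < p n x.
Proof.
move=> unbounded M r r_gt0; apply: contrapT => /forallNP no_hump.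
apply: unbounded; exists (`|M| / r); split; first by rewrite divr_ge0 ?normr_ge0 ?ltW.
move=> n x; have [x0|x_neq0] := eqVneq x 0.
  by rewrite x0 seminorm0 (hnorm0 hs) mulr0.
have Nx_gt0 : 0 < N x.
  by rewrite lt_def hnorm_ge0 andbT; apply: contra x_neq0 => /eqP/(hnorm_eq0 hs)->.
set c : R := r / N x; have c_gt0 : 0 < c by rewrite divr_gt0.
have : p n (c%:C *: x) <= M.
  rewrite leNgt; apply/negP => hump; apply: (no_hump n); exists (c%:C *: x).
  by rewrite (hnormZ hs) cabsR gtr0_norm // divfK ?gt_eqF.
rewrite pZ cabsR gtr0_norm // -ler_pdivlMl // => /le_trans; apply.
rewrite invf_div mulrAC [_ / r * _]mulrC mulrA ler_pM2r ?invr_gt0 //.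
by rewrite ler_pM2l // ler_norm.
Qed.

Section GlidingHump.
Variable K : nat -> R.
Hypothesis K_ge0 : forall n, 0 <= K n.
Hypothesis pK : forall n x, p n x <= K n * N x.
Variable hump : R -> R -> nat * H.
Hypothesis humpP : forall M r, 0 < r ->
  N (hump M r).2 <= r /\ M < p (hump M r).1 (hump M r).2.

(* Sokal's construction: each new hump is added or subtracted so that it is
   not cancelled, and the radii shrink fast enough that later humps cannot
   spoil earlier ones. *)
Definition glide_step (j : nat) (xr : H * R) : H * R :=
  let ny := hump j.+1%:R xr.2 in
  (if p ny.1 ny.2 <= p ny.1 (xr.1 + ny.2) then xr.1 + ny.2 else xr.1 - ny.2,
   xr.2 / (2 * (1 + K ny.1))).

Fixpoint glide (j : nat) : H * R :=
  if j is j'.+1 then glide_step j' (glide j') else (0, 1).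

Let x j := (glide j).1.
Let r j := (glide j).2.
Let n j := (hump j.+1%:R (r j)).1.

Lemma glide_r_gt0 j : 0 < r j.
Proof.
elim: j => [|j IH]; first exact: ltr01.
by rewrite /r /= divr_gt0 // mulr_gt0 // ltr_pwDl.
Qed.

Lemma glide_r_half j : r j.+1 <= r j / 2.
Proof.
have := glide_r_gt0 j; have := K_ge0 (n j); rewrite /r /= -/(r j) -/(n j).
move: (r j) (K (n j)) => a k k0 a0.
by rewrite ler_pM2l // lef_pV2 ?posrE ?mulr_gt0 //; lra.
Qed.

Lemma glide_r_le j : r j <= (j.+1%:R)^-1.
Proof.
elim: j => [|j IH]; first by rewrite invr1.
have : (j.+1%:R)^-1 / 2 <= (j.+2%:R : R)^-1.
  by rewrite -invfM lef_pV2 ?posrE ?mulr_gt0 // -natrM ler_nat; lia.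
have := glide_r_half j; move: IH.
by move: (r j) (r j.+1) (j.+1%:R^-1 : R) (j.+2%:R^-1 : R) => a b c d; lra.
Qed.

Lemma glide_K_r j : K (n j) * (2 * r j.+1) <= 1.
Proof.
have := glide_r_le j; have := glide_r_gt0 j; have := K_ge0 (n j).
rewrite /r /= -/(r j) -/(n j); move: (r j) (K (n j)) => a k k0 a0 a1.
have -> : k * (2 * (a / (2 * (1 + k)))) = a * (k / (1 + k)) by field; lra.
have q1 : k / (1 + k) <= 1 by rewrite ler_pdivrMr; lra.
have {}a1 : a <= 1 by apply: le_trans a1 _; rewrite invf_le1 ?ler1n ?ltr0Sn.
rewrite -[X in _ <= X]mulr1; apply: ler_pM => //; [exact: ltW | rewrite divr_ge0 //; lra].
Qed.

Lemma glide_step_norm j : N (x j.+1 - x j) <= r j.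
Proof.
have [Ny _] := humpP j.+1%:R (glide_r_gt0 j).
by rewrite /x /=; case: ifP => _; rewrite addrC addKr ?(hnormN hs).
Qed.

Lemma glide_hump j : j.+1%:R < p (n j) (x j.+1).
Proof.
have [_] := humpP j.+1%:R (glide_r_gt0 j).
rewrite /x /n /= -/(r j) -/(x j); set m := (hump _ _).1; set y := (hump _ _).2.
case: ifP => [le_y|/negbT]; first by move=> hy; apply: lt_le_trans hy le_y.
by rewrite -ltNge => lt_y hy; have [|] := seminorm_shift m (x j) y; lra.
Qed.

Lemma glide_unbounded : exists l, forall j, exists m, j%:R < p m l.
Proof.
have [l xl] : exists l, forall j, N (x j - l) <= 2 * r j.
  apply: (geometric_norm_cvg hs glide_step_norm glide_r_half) => eps eps_gt0.
  have [j jP] := inv_succ_lt eps_gt0.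
  by exists j; apply: le_lt_trans (glide_r_le j) (jP j (leqnn j)).
exists l => j; exists (n j); have := glide_hump j; have := glide_K_r j.
have := pD (n j) l (x j.+1 - l); rewrite addrC subrK.
have := pK (n j) (x j.+1 - l).
have := ler_wpM2l (K_ge0 (n j)) (xl j.+1).
rewrite -natr1; lra.
Qed.

End GlidingHump.

Theorem uniform_boundedness :
  (forall n, exists K, forall x, p n x <= K * N x) ->
  (forall x, exists B, forall n, p n x <= B) ->
  exists M, 0 <= M /\ forall n x, p n x <= M * N x.
Proof.
move=> /choice [K pK] pB; apply: contrapT => /unbounded_humps humps.
have /choice [hump humpP] : forall Mr : R * R, exists ny,
    0 < Mr.2 -> N ny.2 <= Mr.2 /\ Mr.1 < p ny.1 ny.2.
  case=> M r /=; have [r_gt0|r_le0] := ltP 0 r; last by exists (0%N, 0) => ?; exfalso; lra.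
  by have [m [y my]] := humps M r r_gt0; exists (m, y).
have K_ge0 m : 0 <= `|K m| by [].
have pK' m y : p m y <= `|K m| * N y.
  by apply: le_trans (pK m y) _; apply: ler_wpM2r; rewrite ?hnorm_ge0 ?ler_norm.
have [l lP] := glide_unbounded K_ge0 pK' (fun M r => humpP (M, r)).
have [B BP] := pB l.
have := archi_boundP (normr_ge0 B); set b := Num.bound _ => Bb.
have [m bm] := lP b; have := BP m; have := ler_norm B; lra.
Qed.

End UniformBoundedness.

Lemma eventually_bounded (R : realDomainType) (u : nat -> R) M B :
  (forall n, (M <= n)%N -> u n <= B) -> exists B', forall n, u n <= B'.
Proof.
move=> uB; exists (`|B| + \sum_(m < M) `|u m|) => n.
have sum_ge0 : 0 <= \sum_(m < M) `|u m| by apply: sumr_ge0.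
have [/uB|nM] := leqP M n; first by have := ler_norm B; lra.
apply: le_trans (ler_norm (u n)) _; rewrite (bigD1 (Ordinal nM)) //= addrCA lerDl.
by rewrite addr_ge0 ?sumr_ge0.
Qed.

Section WeakBoundedness.
Variable R : realType.
Local Notation C := (R[i]).
Variables (H : lmodType C) (ip : H -> H -> C).
Hypothesis hs : hilbert_space ip.
Local Notation N := (hnorm ip).

Lemma weak_cvg_bounded u l : weak_cvg ip u l -> exists B, forall n, N (u n) <= B.
Proof.
move=> ul.
have [M [M_ge0 MP]] : exists M, 0 <= M /\ forall n g, cabs (ip g (u n)) <= M * N g.
  apply: (uniform_boundedness hs) => [n x y|n t x|n|g].
  - by rewrite (ipDl hs) cabsD.
  - by rewrite (ipZl hs) cabsM.
  - by exists (N (u n)) => g; rewrite mulrC cauchy_schwarz.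
  - have [M uM] := ul g 1 ltr01; apply: (eventually_bounded (B := cabs (ip l g) + 1)).
    move=> n /uM unl; rewrite (ip_conj hs (u n) g) cabsJ.
    by have := cabsD (ip (u n) g - ip l g) (ip l g); rewrite subrK; lra.
exists M => n; have := MP n (u n); rewrite (ip_sqnorm hs) cabsR ger0_norm ?sqr_ge0 //.
by have := hnorm_ge0 ip (u n); nra.
Qed.

Variable T : nat -> H -> H.
Hypothesis TD : forall n x y, T n (x + y) = T n x + T n y.
Hypothesis TZ : forall n t x, T n (t *: x) = t *: T n x.

Lemma uniform_bound_of_weak_cvg :
  (forall n, exists K, forall x, N (T n x) <= K * N x) ->
  (forall x, exists l, weak_cvg ip (fun n => T n x) l) ->
  exists M, 0 <= M /\ forall n x, N (T n x) <= M * N x.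
Proof.
move=> TK Tw; apply: (uniform_boundedness hs) => [n x y|n t x|//|x].
- by rewrite TD hnormD.
- by rewrite TZ hnormZ.
- by have [l /weak_cvg_bounded] := Tw x.
Qed.

Definition adherent (A : set H) (v : H) : Prop :=
  forall eps, 0 < eps -> exists u, A u /\ N (v - u) < eps.

Lemma norm_cvg_of_dense (A : set H) M :
  0 <= M -> (forall n x, N (T n x) <= M * N x) -> (forall h, adherent A h) ->
  (forall u, A u -> norm_cvg ip (fun n => T n u) u) ->
  forall h, norm_cvg ip (fun n => T n h) h.
Proof.
move=> M_ge0 TM A_dense TA h eps eps_gt0.
have M2_gt0 : 0 < M + 2 by lra.
set d := eps / (M + 2); have d_gt0 : 0 < d by rewrite divr_gt0.
have [u [Au hu]] := A_dense h d d_gt0; have [K TK] := TA u Au d d_gt0.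
exists K => n /TK Tu.
have -> : T n h - h = T n (h - u) + ((T n u - u) + (u - h)).
  by rewrite !addrA subrK -TD subrK.
apply: le_lt_trans (hnormD hs _ _) _.
apply: le_lt_trans (lerD (TM n (h - u)) (hnormD hs _ _)) _.
rewrite (hnorm_distC hs u).
have : M * N (h - u) <= M * d by rewrite ler_wpM2l // ltW.
have : eps = M * d + 2 * d by rewrite /d -mulrDl mulrC divfK ?gt_eqF // addrC.
lra.
Qed.

End WeakBoundedness.

Section Projection.
Variable R : realType.
Local Notation C := (R[i]).
Variables (H : lmodType C) (ip : H -> H -> C).
Hypothesis hs : hilbert_space ip.
Local Notation N := (hnorm ip).
Local Open Scope classical_set_scope.

Lemma apollonius h u v : N (u - v) ^+ 2 =
  2 * N (h - u) ^+ 2 + 2 * N (h - v) ^+ 2 - 4 * N (h - 2^-1 *: (u + v)) ^+ 2.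
Proof.
have := parallelogram hs (h - u) (h - v).
have -> : h - u - (h - v) = v - u by rewrite opprB addrC addrA subrK.
have -> : h - u + (h - v) = 2 *: (h - 2^-1 *: (u + v)).
  rewrite scalerBr scalerA divff ?pnatr_eq0 // scale1r scaler_nat mulr2n.
  by rewrite addrACA opprD.
rewrite (hnormZ hs) cabs_nat (hnorm_distC hs v); lra.
Qed.

Variable A : set H.
Hypothesis A0 : A 0.
Hypothesis A_lin : forall u v t, A u -> A v -> A (u + t *: v).
Variable h : H.

Definition dist : R := inf [set N (h - u) | u in A].

Let dist_lb : has_lbound [set N (h - u) | u in A].
Proof. by exists 0 => _ [u _ <-]; apply: hnorm_ge0. Qed.

Let dist_has_inf : has_inf [set N (h - u) | u in A].
Proof. by split => //; exists (N (h - 0)), 0. Qed.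

Lemma dist_le u : A u -> dist <= N (h - u).
Proof. by move=> Au; apply: ge_inf dist_lb _ _; exists u. Qed.

Lemma dist_ge0 : 0 <= dist.
Proof. by apply: lb_le_inf (dist_has_inf.1) _ => _ [u _ <-]; apply: hnorm_ge0. Qed.

Lemma dist_approx eps : 0 < eps -> exists u, A u /\ N (h - u) < dist + eps.
Proof. by move=> /inf_adherent /(_ dist_has_inf) [_ [u Au <-]]; exists u. Qed.

Lemma dist_le_adherent v : adherent ip A v -> dist <= N (h - v).
Proof.
move=> Av; apply/ler_addgt0Pr => eps /Av [u [Au vu]].
have := dist_le Au; have := hnorm_distD hs h v u; lra.
Qed.

Lemma adherent_shift v u t : adherent ip A v -> A u -> adherent ip A (v + t *: u).
Proof.
move=> Av Au eps /Av [w [Aw vw]]; exists (w + t *: u); split; first exact: A_lin.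
by rewrite opprD addrACA subrr addr0.
Qed.

Lemma near_minimizers_close u v (d1 d2 : R) : A u -> A v -> 0 <= d1 -> 0 <= d2 ->
  N (h - u) <= dist + d1 -> N (h - v) <= dist + d2 ->
  N (u - v) ^+ 2 <= 2 * d1 * (2 * dist + d1) + 2 * d2 * (2 * dist + d2).
Proof.
move=> Au Av d1_ge0 d2_ge0 hu hv.
have Amid : A (2^-1 *: (u + v)).
  by rewrite scalerDr; apply: A_lin => //; rewrite -[_ *: u]add0r; apply: A_lin.
have := ler_pM (hnorm_ge0 _ _) (hnorm_ge0 _ _) hu hu.
have := ler_pM (hnorm_ge0 _ _) (hnorm_ge0 _ _) hv hv.
have := ler_pM dist_ge0 dist_ge0 (dist_le Amid) (dist_le Amid).
rewrite (apollonius h u v) !expr2.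
move: (N (h - u) * _) (N (h - v) * _) (N (h - _) * _) => a b m.
lra.
Qed.

Lemma exists_minimizer : exists v, adherent ip A v /\ N (h - v) <= dist.
Proof.
have /choice [w wP] m : exists u, A u /\ N (h - u) < dist + (m.+1%:R)^-1.
  by apply: dist_approx; rewrite invr_gt0.
have inv_ge0 m : 0 <= (m.+1%:R : R)^-1 by rewrite invr_ge0.
have inv_le1 m : (m.+1%:R : R)^-1 <= 1 by rewrite invf_le1 ?ler1n ?ltr0Sn.
have [v wv] : exists v, norm_cvg ip w v.
  apply: (hilbert_complete hs) => eps eps_gt0.
  have d1_gt0 : 0 < 4 * (2 * dist + 1) by have := dist_ge0; lra.
  have [j jP] := inv_succ_lt (divr_gt0 (exprn_gt0 2 eps_gt0) d1_gt0).
  exists j => m l jm jl; rewrite -(ltr_pXn2r (ltn0Sn 1)) ?nnegrE ?hnorm_ge0 ?ltW //.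
  have [[Aw_m wm] [Aw_l wl]] := (wP m, wP l).
  apply: le_lt_trans (near_minimizers_close Aw_m Aw_l _ _ (ltW wm) (ltW wl)) _ => //.
  move: (jP m jm) (jP l jl) (inv_le1 m) (inv_le1 l) (inv_ge0 m) (inv_ge0 l).
  rewrite !ltr_pdivlMr //; move: (m.+1%:R^-1 : R) (l.+1%:R^-1 : R) => x y.
  move=> xc yc x1 y1 x0 y0; have := dist_ge0.
  have := ler_wpM2l x0 x1; have := ler_wpM2l y0 y1; rewrite !mulr1; nra.
exists v; split.
  move=> eps /wv [K wK]; exists (w K); split; first by case: (wP K).
  by rewrite (hnorm_distC hs) wK.
apply/ler_addgt0Pr => eps eps_gt0; have eps2_gt0 : 0 < eps / 2 by rewrite divr_gt0.
have [K wK] := wv _ eps2_gt0; have [j jP] := inv_succ_lt eps2_gt0.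
set m := maxn K j; have [_] := wP m; have := jP m (leq_maxr K j).
have := wK m (leq_maxl K j); have := hnorm_distD hs h (w m) v.
move: (m.+1%:R^-1 : R) => x; lra.
Qed.

Theorem projection : exists v, adherent ip A v /\ forall u, A u -> ip (h - v) u = 0.
Proof.
have [v [Av hv]] := exists_minimizer; exists v; split => // u Au.
apply: (ip_eq0_of_minimal hs) => t; apply: le_trans hv _.
by rewrite -addrA -opprD; apply/dist_le_adherent/adherent_shift.
Qed.

End Projection.

Section BiorthogonalExpansion.
Variable R : realType.
Local Notation C := (R[i]).
Variables (H : lmodType C) (ip : H -> H -> C).
Hypothesis hs : hilbert_space ip.
Local Notation N := (hnorm ip).

Variables (e f : nat -> H) (a : nat -> nat -> C) (S : nat -> H -> H).
Hypothesis biorth : forall j k, j <> k -> ip (e j) (f k) = 0.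
Hypothesis ef_neq0 : forall k, ip (e k) (f k) != 0.
Hypothesis summable : forall n, exists M, forall K,
  \sum_(k < K) cabs (a n k) * (N (e k) * N (f k) / cabs (ip (e k) (f k))) <= M.
Hypothesis S_sum : forall n h,
  has_sum ip (fun k => (a n k * (ip h (f k) / ip (e k) (f k))) *: e k) (S n h).

Lemma S_linear n x y t : S n (x + t *: y) = S n x + t *: S n y.
Proof.
apply: (has_sum_unique hs (S_sum n _)).
apply: has_sum_ext (has_sum_linear hs t (S_sum n x) (S_sum n y)) => k.
by rewrite (ipDl hs) (ipZl hs) !scalerA -scalerDl; congr (_ *: _); ring.
Qed.

Lemma S0 n : S n 0 = 0.
Proof.
have := S_linear n 0 0 1; rewrite scaler0 addr0 scale1r => S00.
by apply: (addrI (S n 0)); rewrite addr0 -S00.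
Qed.

Lemma SD n x y : S n (x + y) = S n x + S n y.
Proof. by have := S_linear n x y 1; rewrite !scale1r. Qed.

Lemma SZ n t x : S n (t *: x) = t *: S n x.
Proof. by rewrite -[t *: x]add0r S_linear S0 add0r. Qed.

Lemma S_e n j : S n (e j) = a n j *: e j.
Proof.
apply: (has_sum_unique hs (S_sum n (e j))).
apply: (eventually_const_norm_cvg hs); exists j.+1 => m jm.
rewrite (bigD1 (Ordinal jm)) //= big1 ?addr0 => [|k kj]; first by rewrite divff ?mulr1.
rewrite biorth ?mul0r ?mulr0 ?scale0r // => jk.
by apply/(negP kj)/eqP/val_inj; rewrite /= jk.
Qed.

Lemma S_bounded n : exists M, forall x, N (S n x) <= M * N x.
Proof.
have [M MP] := summable n; exists M => x; apply/ler_addgt0Pr => eps /(S_sum n x) [K SK].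
have := SK K (leqnn K); rewrite (hnorm_distC hs); set P := \sum_(k < K) _ => SP.
rewrite -(subrK P (S n x)); apply: le_trans (hnormD hs _ _) _.
rewrite addrC; apply: lerD _ (ltW SP); apply: le_trans (hnorm_sum hs _ _) _.
apply: le_trans (ler_wpM2r (hnorm_ge0 ip x) (MP K)); rewrite mulr_suml.
apply: ler_sum => k _; rewrite (hnormZ hs) !cabsM cabsV.
have ef_gt0 := cabs_gt0 (ef_neq0 k); set q := cabs (ip (e k) (f k)) in ef_gt0 *.
have -> : cabs (a n k) * (cabs (ip x (f k)) * q^-1) * N (e k) =
    cabs (a n k) * N (e k) / q * cabs (ip x (f k)) by ring.
have -> : cabs (a n k) * (N (e k) * N (f k) / q) * N x =
    cabs (a n k) * N (e k) / q * (N x * N (f k)) by ring.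
apply: ler_wpM2l; last exact: cauchy_schwarz.
by rewrite divr_ge0 ?mulr_ge0 ?cabs_ge0 ?hnorm_ge0 ?ltW.
Qed.

Lemma S_orthogonal w : (forall k, ip w (e k) = 0) -> forall n x, ip (S n x) w = 0.
Proof.
move=> we n x; apply: ccvg_unique (has_sum_ipl hs w (S_sum n x)) _.
apply: eventually_const_ccvg; exists 0%N => K _; rewrite big1 // => k _.
by rewrite (ipZl hs) (ip_conj hs w) we conjc0 mulr0.
Qed.

Definition lincomb (s : seq (C * nat)) : H := \sum_(p <- s) p.1 *: e p.2.

Definition span : set H := fun u => exists s, u = lincomb s.

Lemma span0 : span 0.
Proof. by exists [::]; rewrite /lincomb big_nil. Qed.

Lemma span_linear u v t : span u -> span v -> span (u + t *: v).
Proof.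
case=> s -> [s' ->]; exists (s ++ [seq (t * p.1, p.2) | p <- s']).
rewrite /lincomb big_cat big_map scaler_sumr; congr (_ + _).
by apply: eq_bigr => p _; rewrite scalerA.
Qed.

Lemma span_e k : span (e k).
Proof. by exists [:: (1, k)]; rewrite /lincomb big_seq1 scale1r. Qed.

Variable Sadj : nat -> H -> H.
Hypothesis Sadj_sum : forall n h,
  has_sum ip (fun k => (conjc (a n k) * (ip h (e k) / ip (f k) (e k))) *: f k) (Sadj n h).

Lemma S_adjoint n h g : ip (S n h) g = ip h (Sadj n g).
Proof.
rewrite (ip_conj hs (Sadj n g) h).
apply: ccvg_unique (has_sum_ipl hs g (S_sum n h)) _.
apply: ccvg_ext (ccvg_conj (has_sum_ipl hs h (Sadj_sum n g))) => m.
rewrite rmorph_sum; apply: eq_bigr => k _ /=.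
by rewrite !(ipZl hs) !rmorphM /= conjc_inv conjcK -!(ip_conj hs); ring.
Qed.

Section WeakLimit.
Hypothesis S_weak : forall h, weak_cvg ip (fun n => S n h) h.

Lemma coef_cvg j : ccvg (fun n => a n j) 1.
Proof.
move=> eps eps_gt0; have ef_gt0 := cabs_gt0 (ef_neq0 j).
have [M SM] := S_weak (e j) (f j) (mulr_gt0 eps_gt0 ef_gt0); exists M => n.
by move=> /SM; rewrite S_e (ipZl hs) -[X in _ - X]mul1r -mulrBl cabsM ltr_pM2r.
Qed.

Lemma S_cvg_e j : norm_cvg ip (fun n => S n (e j)) (e j).
Proof.
move=> eps eps_gt0; have e1_gt0 : 0 < N (e j) + 1 by rewrite ltr_pwDr ?hnorm_ge0.
have [M aM] := coef_cvg j (divr_gt0 eps_gt0 e1_gt0); exists M => n /aM.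
rewrite ltr_pdivlMr // mulrDr mulr1 => anj.
rewrite S_e -[X in _ - X]scale1r -scalerBl (hnormZ hs).
by have := cabs_ge0 (a n j - 1); have := hnorm_ge0 ip (e j); nra.
Qed.

Lemma S_cvg_span u : span u -> norm_cvg ip (fun n => S n u) u.
Proof.
case=> s ->; elim: s => [|p s IH].
  rewrite /lincomb big_nil; apply: (eventually_const_norm_cvg hs).
  by exists 0%N => n _; rewrite S0.
have -> : lincomb (p :: s) = lincomb s + p.1 *: e p.2.
  by rewrite /lincomb big_cons addrC.
have -> : (fun n => S n (lincomb s + p.1 *: e p.2)) =
    (fun n => S n (lincomb s) + p.1 *: S n (e p.2)).
  by apply/funext => n; rewrite S_linear.
exact: (norm_cvg_linear hs p.1 IH (S_cvg_e p.2)).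
Qed.

Lemma span_dense h : adherent ip span h.
Proof.
have [v [v_span hv]] := projection hs span0 span_linear h.
have w_orth k : ip (h - v) (e k) = 0 by apply/hv/span_e.
have /(ip_self_eq0 hs) /subr0_eq -> // : ip (h - v) (h - v) = 0.
apply: ccvg_unique (S_weak (h - v) (h - v)) _.
by apply: eventually_const_ccvg; exists 0%N => n _; apply: S_orthogonal.
Qed.

Theorem S_norm_cvg h : norm_cvg ip (fun n => S n h) h.
Proof.
have [M [M_ge0 MP]] := uniform_bound_of_weak_cvg hs SD SZ S_bounded
  (fun x => ex_intro _ x (S_weak x)).
apply: (norm_cvg_of_dense hs SD M_ge0 MP); [exact: span_dense | exact: S_cvg_span].
Qed.

End WeakLimit.

End BiorthogonalExpansion.

Section Duality.
Variable R : realType.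
Local Notation C := (R[i]).
Variables (H : lmodType C) (ip : H -> H -> C).
Hypothesis hs : hilbert_space ip.
Local Notation N := (hnorm ip).
Variables (e f : nat -> H) (a : nat -> nat -> C).

Lemma biorth_sym : (forall j k, j <> k -> ip (e j) (f k) = 0) ->
  forall j k, j <> k -> ip (f j) (e k) = 0.
Proof. by move=> ef j k jk; rewrite (ip_conj hs) ef ?conjc0 // => kj; apply: jk. Qed.

Lemma ef_neq0_sym : (forall k, ip (e k) (f k) != 0) -> forall k, ip (f k) (e k) != 0.
Proof. by move=> ef k; rewrite (ip_conj hs) conjc_eq0. Qed.

Lemma summable_sym :
  (forall n, exists M, forall K, \sum_(k < K) cabs (a n k) *
     (N (e k) * N (f k) / cabs (ip (e k) (f k))) <= M) ->
  forall n, exists M, forall K, \sum_(k < K) cabs (conjc (a n k)) *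
     (N (f k) * N (e k) / cabs (ip (f k) (e k))) <= M.
Proof.
move=> sa n; have [M MP] := sa n; exists M => K.
by under eq_bigr => k _ do rewrite cabsJ (ip_conj hs (e k)) cabsJ [N (f k) * _]mulrC.
Qed.

End Duality.

Theorem theorem6p2 (R : realType) (H : lmodType (R[i])) (ip : H -> H -> R[i])
  (e f : nat -> H) (a : nat -> nat -> R[i])
  (S Sadj : nat -> H -> H) :
  hilbert_space ip ->
  (forall j k : nat, j <> k -> ip (e j) (f k) = 0) ->
  (forall k : nat, ip (e k) (f k) != 0) ->
  (* sum_k |a_nk| ||P_k|| < oo, with ||P_k|| = ||e_k|| ||f_k|| / |<e_k,f_k>| *)
  (forall n : nat, exists M : R, forall N : nat,
     \sum_(k < N) cabs (a n k) * (hnorm ip (e k) * hnorm ip (f k) / cabs (ip (e k) (f k)))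
       <= M) ->
  (* S_n^A(h) = sum_k a_nk <h,f_k>/<e_k,f_k> e_k *)
  (forall (n : nat) (h : H),
     has_sum ip (fun k => (a n k * (ip h (f k) / ip (e k) (f k))) *: e k) (S n h)) ->
  (* (S_n^A)^*(h) = sum_k conj(a_nk) <h,e_k>/<f_k,e_k> f_k *)
  (forall (n : nat) (h : H),
     has_sum ip (fun k => (conjc (a n k) * (ip h (e k) / ip (f k) (e k))) *: f k)
       (Sadj n h)) ->
  [/\ ((forall h : H, weak_cvg ip (fun n => S n h) h) <->
       (forall h : H, norm_cvg ip (fun n => S n h) h)),
      ((forall h : H, norm_cvg ip (fun n => S n h) h) <->
       (forall h : H, weak_cvg ip (fun n => Sadj n h) h)) &
      ((forall h : H, weak_cvg ip (fun n => Sadj n h) h) <->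
       (forall h : H, norm_cvg ip (fun n => Sadj n h) h))].
Proof.
move=> hs biorth ef_neq0 summable S_sum Sadj_sum.
have adjE := S_adjoint hs S_sum Sadj_sum.
have adjE' n h g : ip (Sadj n h) g = ip h (S n g).
  by rewrite (ip_conj hs) -adjE -(ip_conj hs).
have norm_weak := norm_cvg_weak hs.
have S_weak_norm := S_norm_cvg hs biorth ef_neq0 summable S_sum.
have Sadj_weak_norm := S_norm_cvg hs (a := fun n k => conjc (a n k))
  (biorth_sym hs biorth) (ef_neq0_sym hs ef_neq0) (summable_sym hs summable) Sadj_sum.
split; split.
- exact: S_weak_norm.
- by move=> Sn h; apply: norm_weak.
- by move=> Sn; apply: (weak_cvg_adjoint hs adjE) => h; apply: norm_weak.
- by move=> Sadj_w; apply: S_weak_norm; apply: (weak_cvg_adjoint hs adjE' Sadj_w).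
- exact: Sadj_weak_norm.
- by move=> Sadj_n h; apply: norm_weak.
Qed.
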